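(* Let $\Theta$ be a variety of algebras and let $H\in\Theta$ be a finitely generated algebra that contains no proper subalgebra isomorphic to $H$. Then every algebra $G\in\Theta$ isotyped to $H$ is isomorphic to $H$.
   Context: $X^0=\{x_1,x_2,\dots\}$ is an infinite set of variables; for finite $X\subset X^0$, $W(X)$ is the free $\Theta$-algebra on $X$; homomorphisms $W(X)\to H$ are points. For each finite $X$, the set $\Phi(X)$ of formulas of sort $X$ is defined inductively: equalities $w\equiv w'$ ($w,w'\in W(X)$) are in $\Phi(X)$; $\Phi(X)$ is closed under $\neg,\vee,\wedge$ and $\exists x$ for $x\in X$; and for each homomorphism $s:W(X)\to W(Y)$ and $u\in\Phi(X)$, $s_*u\in\Phi(Y)$. Values $Val^X_H(u)\subseteq\mathrm{Hom}(W(X),H)$: $Val^X_H(w\equiv w')=\{\mu:\mu(w)=\mu(w')\}$; $\mu\in Val^X_H(\exists x\,u)$ iff some point $\nu$ agreeing with $\mu$ on $X\setminus\{x\}$ lies in $Val^X_H(u)$; $\vee,\wedge,\neg$ are union, intersection, complement; $\mu\in Val^Y_H(s_*u)$ iff $\mu\circ s\in Val^X_H(u)$. The logical kernel of $\mu:W(X)\to H$ is $LKer(\mu)=\{u\in\Phi(X):\mu\in Val^X_H(u)\}$; a set $T\subseteq\Phi(X)$ is an $X$-type of $H$ if $T=LKer(\mu)$ for some point $\mu:W(X)\to H$. Algebras $H_1,H_2\in\Theta$ are isotyped if for every finite $X\subset X^0$, every $X$-type of $H_1$ is an $X$-type of $H_2$ and vice versa. *)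

From mathcomp Require Import all_boot.
From mathcomp Require Import finmap.
Set Implicit Arguments.
Unset Strict Implicit.
Unset Printing Implicit Defensive.
Local Open Scope fset_scope.

Record signature := Signature { sym : Type; ar : sym -> nat }.

Record algebra (s : signature) := Algebra {
  carrier :> Type;
  ops : forall f : sym s, ('I_(ar f) -> carrier) -> carrier }.
Arguments ops {s} a f _.

Inductive term (s : signature) (V : Type) : Type :=
| Var : V -> term s V
| App : forall f : sym s, ('I_(ar f) -> term s V) -> term s V.
Arguments Var {s V}.
Arguments App {s V}.

Fixpoint eval (s : signature) (A : algebra s) (V : Type) (mu : V -> A)
  (t : term s V) : A :=
  match t with
  | Var v => mu v
  | App f ts => ops A f (fun i => eval mu (ts i))
  end.

Record variety (s : signature) := Variety {
  identities : term s nat -> term s nat -> Prop }.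

Definition in_variety (s : signature) (Th : variety s) (A : algebra s) : Prop :=
  forall t1 t2, identities Th t1 t2 ->
    forall rho : nat -> A, eval rho t1 = eval rho t2.

Definition is_hom (s : signature) (A B : algebra s) (h : A -> B) : Prop :=
  forall (f : sym s) (args : 'I_(ar f) -> A),
    h (ops A f args) = ops B f (fun i => h (args i)).

Definition isomorphic (s : signature) (A B : algebra s) : Prop :=
  exists h : A -> B, is_hom h /\ bijective h.

Definition closed (s : signature) (A : algebra s) (P : A -> Prop) : Prop :=
  forall (f : sym s) (args : 'I_(ar f) -> A),
    (forall i, P (args i)) -> P (ops A f args).

Definition subalgebra (s : signature) (A : algebra s) (P : A -> Prop)
  (cl : closed P) : algebra s :=
  @Algebra s {x : A | P x}
    (fun f args => exist P (ops A f (fun i => proj1_sig (args i)))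
                         (cl f _ (fun i => proj2_sig (args i)))).

Definition no_proper_iso_subalgebra (s : signature) (H : algebra s) : Prop :=
  forall (P : H -> Prop) (cl : closed P),
    (exists x : H, ~ P x) -> ~ isomorphic (subalgebra cl) H.

Definition fin_generated (s : signature) (H : algebra s) : Prop :=
  exists gens : seq H, forall P : H -> Prop, closed P ->
    (forall i, i < size gens -> forall x0 : H, P (nth x0 gens i)) -> forall x, P x.

(** Elements of W(X) are represented by terms over the variables of X
    (W(X) = terms modulo the identities of the variety), homomorphisms
    W(X) -> W(Y) by substitutions X -> term Y, points W(X) -> H by
    assignments X -> H. *)
Definition vars (X : {fset nat}) := {x : nat | x \in X}.

Inductive formula (s : signature) : {fset nat} -> Type :=
| Feq  X : term s (vars X) -> term s (vars X) -> formula s X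
| Fneg X : formula s X -> formula s X
| For  X : formula s X -> formula s X -> formula s X
| Fand X : formula s X -> formula s X -> formula s X
| Fex  X : vars X -> formula s X -> formula s X
| Fsub X Y : (vars X -> term s (vars Y)) -> formula s X -> formula s Y.

Definition upd (H : Type) (X : {fset nat}) (mu : vars X -> H) (x : vars X) (a : H)
  : vars X -> H :=
  fun y => if proj1_sig y == proj1_sig x then a else mu y.

Fixpoint sat (s : signature) (H : algebra s) (X : {fset nat}) (u : formula s X)
  : (vars X -> H) -> Prop :=
  match u in formula _ X return (vars X -> H) -> Prop with
  | Feq _ w w' => fun mu => eval mu w = eval mu w'
  | Fneg _ u1 => fun mu => ~ sat u1 mu
  | For _ u1 u2 => fun mu => sat u1 mu \/ sat u2 mu
  | Fand _ u1 u2 => fun mu => sat u1 mu /\ sat u2 mu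
  | Fex _ x u1 => fun mu => exists a : H, sat u1 (upd mu x a)
  | Fsub _ _ sb u1 => fun mu => sat u1 (fun x => eval mu (sb x))
  end.

Definition LKer (s : signature) (H : algebra s) (X : {fset nat}) (mu : vars X -> H)
  : formula s X -> Prop := fun u => @sat s H X u mu.

Definition is_type (s : signature) (H : algebra s) (X : {fset nat})
  (T : formula s X -> Prop) : Prop :=
  exists mu : vars X -> H, T = @LKer s H X mu.

Definition isotyped (s : signature) (H1 H2 : algebra s) : Prop :=
  forall (X : {fset nat}) (T : formula s X -> Prop),
    (is_type H1 T -> is_type H2 T) /\ (is_type H2 T -> is_type H1 T).

(** A finite generating tuple [mu] of [H] is a point
    of [H]; its type is realised in [G] by a point [nu], and [t |-> eval nu t]
    is then a well-defined injective homomorphism [H -> G].  It is onto: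
    for [b : G], realise the type of [(nu, b)] in [H] by [(mu', c)].  The
    restriction of [mu'] has the same type as [mu], so it induces an injective
    endomorphism of [H], which is onto because [H] has no proper isomorphic
    subalgebra.  Hence [c = eval mu' t] for some term [t], and since this
    equation belongs to the type of [(nu, b)], also [b = eval nu t]. *)
From Pilot Require Import Defs.
From mathcomp Require Import all_boot finmap.
From Stdlib Require Import ClassicalEpsilon FunctionalExtensionality ProofIrrelevance Classical.
Set Implicit Arguments.
Unset Strict Implicit.
Unset Printing Implicit Defensive.
Local Open Scope fset_scope.

Lemma bijective_inj_onto (A B : Type) (h : A -> B) :
  injective h -> (forall b, exists a, h a = b) -> bijective h.
Proof.
move=> h_inj /ClassicalEpsilon.choice [g gK]; exists g => // a.
by apply: h_inj; rewrite gK.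
Qed.

Section Algebras.
Variable s : signature.
Implicit Types A B G H : algebra s.

Lemma hom_inverse A B (h : A -> B) (g : B -> A) :
  is_hom h -> cancel h g -> cancel g h -> is_hom g.
Proof.
move=> h_hom hK gK f args.
have -> : args = (fun i => h (g (args i))).
  by apply: functional_extensionality => i; rewrite gK.
rewrite -h_hom hK; congr (ops A f).
by apply: functional_extensionality => i; rewrite hK.
Qed.

Lemma isomorphic_sym A B : isomorphic A B -> isomorphic B A.
Proof.
case=> h [h_hom [g hK gK]]; exists g; split; last by exists h.
exact: hom_inverse h_hom hK gK.
Qed.

Definition image_pred A B (h : A -> B) (b : B) : Prop := exists a, h a = b.

Lemma closed_image A B (h : A -> B) : is_hom h -> Defs.closed (image_pred h).
Proof.
move=> h_hom f args /ClassicalEpsilon.choice [pre preE]; exists (ops A f pre).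
by rewrite h_hom; congr (ops B f); apply: functional_extensionality.
Qed.

Lemma sub_val_inj A (P : A -> Prop) (x y : {a : A | P a}) :
  proj1_sig x = proj1_sig y -> x = y.
Proof.
case: x => a Pa; case: y => b Pb /= eq_ab; subst b.
by rewrite (proof_irrelevance _ Pa Pb).
Qed.

Lemma isomorphic_image A B (h : A -> B) (h_hom : is_hom h) :
  injective h -> isomorphic A (subalgebra (closed_image h_hom)).
Proof.
move=> h_inj.
pose corestr (a : A) : subalgebra (closed_image h_hom) := exist _ (h a) (ex_intro _ a erefl).
exists corestr; split.
  by move=> f args; apply: sub_val_inj; rewrite /= h_hom.
apply: bijective_inj_onto => [a1 a2 /(f_equal (@proj1_sig _ _))|]; first exact: h_inj.
by case=> b [a ha]; exists a; apply: sub_val_inj.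
Qed.

Lemma inj_endo_onto H (h : H -> H) :
  no_proper_iso_subalgebra H -> is_hom h -> injective h ->
  forall b, exists a, h a = b.
Proof.
move=> noH h_hom h_inj b; apply: NNPP => b_notin.
apply: (noH _ (closed_image h_hom)); first by exists b.
exact/isomorphic_sym/isomorphic_image.
Qed.

Definition generates A V (mu : V -> A) : Prop := forall a : A, exists t, eval mu t = a.

Definition same_eqs A B V (mu : V -> A) (nu : V -> B) : Prop :=
  forall t t', eval mu t = eval mu t' <-> eval nu t = eval nu t'.

Lemma same_eqs_sym A B V (mu : V -> A) (nu : V -> B) : same_eqs mu nu -> same_eqs nu mu.
Proof. by move=> eqs t t'; apply: iff_sym. Qed.

Lemma closed_generated A V (mu : V -> A) : Defs.closed (fun a => exists t, eval mu t = a).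
Proof.
move=> f args /ClassicalEpsilon.choice [ts tsE]; exists (App f ts) => /=.
by congr (ops A f); apply: functional_extensionality.
Qed.

Lemma hom_of_same_eqs A B V (mu : V -> A) (nu : V -> B) :
  generates mu -> same_eqs mu nu ->
  exists h : A -> B, [/\ is_hom h, injective h & forall t, h (eval mu t) = eval nu t].
Proof.
move=> /ClassicalEpsilon.choice [pick pickE] eqs.
have h_eval t : eval nu (pick (eval mu t)) = eval nu t by apply/eqs; rewrite pickE.
exists (fun a => eval nu (pick a)); split => //.
- move=> f args /=.
  have -> : ops A f args = eval mu (App f (fun i => pick (args i))).
    by rewrite /=; congr (ops A f); apply: functional_extensionality => i; rewrite pickE.
  by rewrite h_eval.
- by move=> a1 a2 /eqs; rewrite !pickE.
Qed.

Lemma isomorphic_generating_points A B V (mu : V -> A) (nu : V -> B) :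
  generates mu -> generates nu -> same_eqs mu nu -> isomorphic A B.
Proof.
move=> mu_gen nu_gen eqs.
have [h [h_hom h_inj hE]] := hom_of_same_eqs mu_gen eqs.
exists h; split => //; apply: bijective_inj_onto => // b.
by have [t <-] := nu_gen b; exists (eval mu t).
Qed.

Lemma generates_same_eqs H V (mu mu' : V -> H) :
  no_proper_iso_subalgebra H -> generates mu -> same_eqs mu mu' -> generates mu'.
Proof.
move=> noH mu_gen eqs a.
have [h [h_hom h_inj hE]] := hom_of_same_eqs mu_gen eqs.
have [a' <-] := inj_endo_onto noH h_hom h_inj a.
by have [t <-] := mu_gen a'; exists t.
Qed.

Fixpoint rename_term V W (m : V -> W) (t : term s V) : term s W :=
  match t with
  | Var v => Var (m v)
  | App f ts => App f (fun i => rename_term m (ts i))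
  end.

Lemma eval_rename A V W (m : V -> W) (rho : W -> A) t :
  eval rho (rename_term m t) = eval (fun v => rho (m v)) t.
Proof.
elim: t => [v|f ts IH] //=; congr (ops A f).
by apply: functional_extensionality => i; rewrite IH.
Qed.

Lemma fin_generated_point H : fin_generated H -> exists X (mu : vars X -> H), generates mu.
Proof.
case=> gens gens_gen.
pose X := [fset i in iota 0 (size gens)].
have in_X i : (i \in X) = (i < size gens) by rewrite in_fset /= mem_iota.
pose mu (x : vars X) := tnth (in_tuple gens) (Ordinal (etrans (esym (in_X _)) (proj2_sig x))).
exists X, mu; apply: (gens_gen _ (@closed_generated _ _ mu)) => i lt_i x0.
have iX : i \in X by rewrite in_X.
by exists (Var (exist _ i iX)); rewrite /= /mu (tnth_nth x0).
Qed.

Lemma LKer_same_eqs A B X (mu : vars X -> A) (nu : vars X -> B) :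
  LKer mu = LKer nu -> same_eqs mu nu.
Proof.
move=> eqK t t'; have eq_t := f_equal (fun T => T (Feq t t')) eqK.
by rewrite /LKer /= in eq_t; rewrite eq_t.
Qed.

Lemma LKer_subst A B X Y (sb : vars X -> term s (vars Y)) (mu : vars Y -> A) (nu : vars Y -> B) :
  LKer mu = LKer nu -> LKer (fun x => eval mu (sb x)) = LKer (fun x => eval nu (sb x)).
Proof.
move=> eqK; apply: functional_extensionality => u.
exact: (f_equal (fun T => T (Fsub sb u)) eqK).
Qed.

Lemma exists_fresh (X : {fset nat}) : exists k, k \notin X.
Proof.
exists (\max_(x <- X) x).+1; apply/negP => /leq_bigmax_seq le_max.
by have := le_max xpredT id isT; rewrite ltnn.
Qed.

Section Extension.
Variables (A : algebra s) (X : {fset nat}) (k : nat).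

Definition vars_incl (x : vars X) : vars (k |` X) := exist _ (val x) (fset1Ur k (valP x)).

Definition vars_new : vars (k |` X) := exist _ k (fset1U1 k X).

Definition extend_point (nu : vars X -> A) (b : A) (y : vars (k |` X)) : A :=
  if insub (val y) is Some x then nu x else b.

Lemma extend_point_incl nu b x : extend_point nu b (vars_incl x) = nu x.
Proof. by rewrite /extend_point valK. Qed.

Lemma extend_point_new nu b : k \notin X -> extend_point nu b vars_new = b.
Proof. by move=> kX; rewrite /extend_point insubN. Qed.

End Extension.
Arguments vars_incl {X} k x.
Arguments extend_point {A X} k nu b y.

Lemma generates_isotyped H G X (mu : vars X -> H) (nu : vars X -> G) :
  no_proper_iso_subalgebra H ->
  (forall Y (T : formula s Y -> Prop), is_type G T -> is_type H T) ->
  generates mu -> LKer mu = LKer nu -> generates nu.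
Proof.
move=> noH GH mu_gen eqK b.
have [k kX] := exists_fresh X.
pose nu' := extend_point k nu b.
have nu'_incl : (fun x => nu' (vars_incl k x)) = nu.
  by apply: functional_extensionality => x; rewrite /nu' extend_point_incl.
have [mu' eqK'] : is_type H (LKer nu') by apply: GH; exists nu'.
have eqK0 : LKer mu = LKer (fun x => mu' (vars_incl k x)).
  by rewrite eqK -nu'_incl; exact: (LKer_subst (fun x => Var (vars_incl k x)) eqK').
have [t mu'_new] := generates_same_eqs noH mu_gen (LKer_same_eqs eqK0) (mu' (vars_new X k)).
exists t; rewrite -nu'_incl -eval_rename -(extend_point_new nu b kX) -/nu'.
by apply/(LKer_same_eqs eqK' _ (Var (vars_new X k))); rewrite /= eval_rename.
Qed.

End Algebras.

Theorem mainTheorem7 (s : signature) (Th : variety s) (H : algebra s) :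
  in_variety Th H -> fin_generated H -> no_proper_iso_subalgebra H ->
  forall G : algebra s, in_variety Th G -> isotyped G H -> isomorphic G H.
Proof.
move=> _ /fin_generated_point [X [mu mu_gen]] noH G _ iso.
have [nu eqK] : is_type G (LKer mu) by apply: (iso X _).2; exists mu.
have GH Y (T : formula s Y -> Prop) : is_type G T -> is_type H T by case: (iso Y T).
have nu_gen := generates_isotyped noH GH mu_gen eqK.
exact: isomorphic_generating_points nu_gen mu_gen (same_eqs_sym (LKer_same_eqs eqK)).
Qed.
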